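(* Let $q$ be a set of operations on a set $\Omega$ and write $\sim$ for $\sim_q$. Then: (1) $\mathrm{Sim}(q)/\!\sim\;=\mathrm{Aut}(q/\!\sim)$, where $\mathrm{Sim}(q)/\!\sim\;=\{\pi/\!\sim:\pi\in\mathrm{Sim}(q)\}$; (2) a quantifier $Q$ on $\Omega$ belongs to $\mathrm{Inv}(\mathrm{Sim}(q))$ if and only if $Q/\!\sim\;\in\mathrm{Inv}(\mathrm{Aut}(q/\!\sim))$.
   Context: A similarity on $\Omega$ is a relation $\pi\subseteq\Omega\times\Omega$ such that every $a$ has some $b$ with $a\pi b$ and every $b$ has some $a$ with $a\pi b$; for relations $R,S\subseteq\Omega^k$, $R\,\pi\,S$ means that coordinatewise $\bar a\pi\bar b$ implies ($\bar a\in R\iff\bar b\in S$). A set of operations is a set of finitary relations and quantifiers (subsets of $\mathcal P(\Omega^{k_1})\times\cdots\times\mathcal P(\Omega^{k_l})$) on $\Omega$; $\mathscr L^-_{\infty\infty}(q)$ is the equality-free infinitary logic with predicate and Lindström quantifier symbols for members of $q$. $a\sim_q b$ iff for all formulas $\phi(x,\bar y)$ of $\mathscr L^-_{\infty\infty}(q)$ and tuples $\bar c$, $\phi(a,\bar c)\iff\phi(b,\bar c)$. A relation is invariant under a similarity or equivalence $\rho$ if $\bar a\rho\bar b$ implies $\bar a\in R\iff\bar b\in R$; a quantifier $Q$ is $\sim$-invariant under $\pi$ if for all $\bar R,\bar S$ of its type with each component invariant under $\sim$ and $R_i\,\pi\,S_i$: $\bar R\in Q\iff\bar S\in Q$. $\mathrm{Sim}(q)$: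 similarities under which all relations of $q$ are invariant and all quantifiers of $q$ are $\sim_q$-invariant. For a set $\Pi$ of similarities, $a\approx_\Pi b$ iff for each finite $k$ and $\bar c\in\Omega^k$ some $\pi\in\Pi$ has $(a,\bar c)\,\pi\,(b,\bar c)$; $\mathrm{Inv}(\Pi)$ is the set of relations invariant under all $\pi\in\Pi$ and quantifiers $\approx_\Pi$-invariant under all $\pi\in\Pi$. With $[a]$ the $\sim$-class of $a$: $\pi/\!\sim\;=\{([a],[b]):a\pi b\}$; for $R\subseteq\Omega^k$, $R/\!\sim\;=\{([a_1],\dots,[a_k]):(a_1,\dots,a_k)\in R\}$; for $R'\subseteq(\Omega/\!\sim)^k$, $\cup R'=\{\bar a\in\Omega^k:([a_1],\dots,[a_k])\in R'\}$; for a quantifier $Q$ on $\Omega$, $Q/\!\sim\;=\{(R'_1,\dots,R'_l):(\cup R'_1,\dots,\cup R'_l)\in Q\}$; $q/\!\sim$ is the set of $R/\!\sim$ and $Q/\!\sim$ for relations $R$ and quantifiers $Q$ in $q$. For a set $\mathcal Q$ of relations and quantifiers on a set $\Omega'$, $\mathrm{Aut}(\mathcal Q)$ is the set of permutations $f$ of $\Omega'$ with $fR=R$ for relations and $(R_1,\dots,R_l)\in Q\iff(fR_1,\dots,fR_l)\in Q$ for quantifiers in $\mathcal Q$; for a set $H$ of permutations of $\Omega'$, $\mathrm{Inv}(H)$ is the set of relations and quantifiers on $\Omega'$ preserved in this sense by all $f\in H$. *)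

From mathcomp Require Import all_boot.
Set Implicit Arguments. Unset Strict Implicit. Unset Printing Implicit Defensive.

Definition relT (Omega : Type) (k : nat) := ('I_k -> Omega) -> Prop.
(* A quantifier of type (k_0,...,k_{l-1}) is a subset of P(Omega^k_0) x ... x P(Omega^k_{l-1}). *)
Definition quantT (Omega : Type) {l : nat} (k : 'I_l -> nat) :=
  (forall m : 'I_l, relT Omega (k m)) -> Prop.

(* A set of operations on Omega, given as an indexed family of relations
   (index type RI, arities rar) and of quantifiers (index type QI, types qlen/qar). *)
Unset Implicit Arguments.
Record ops (Omega : Type) := Ops {
  RI : Type;
  rar : RI -> nat;
  rel : forall i : RI, relT Omega (rar i);
  QI : Type;
  qlen : QI -> nat;
  qar : forall j : QI, 'I_(qlen j) -> nat;
  quant : forall j : QI, quantT Omega (qar j)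
}.
Arguments RI {Omega} : rename.
Arguments rar {Omega q} : rename.
Arguments rel {Omega} q i : rename.
Arguments QI {Omega} : rename.
Arguments qlen {Omega q} : rename.
Arguments qar {Omega q} j : rename.
Arguments quant {Omega} q j : rename.
Set Implicit Arguments.

(* Connectives: atomic formulas for the
   relations of q (no equality), negation, conjunction over an arbitrary index type,
   existential quantification over an arbitrary set of variables, and Lindstrom
   quantifiers of q binding tuples of pairwise distinct variables. *)
Inductive form (Omega : Type) (q : ops Omega) (V : eqType) : Type :=
| FRel (i : RI q) (xs : 'I_(rar i) -> V)
| FNeg (phi : form q V)
| FAnd (J : Type) (phis : J -> form q V)
| FEx (X : V -> Prop) (phi : form q V)
| FQ (j : QI q) (xs : forall m : 'I_(qlen j), 'I_(qar j m) -> V)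
     (xinj : forall m, injective (xs m))
     (phis : forall m : 'I_(qlen j), form q V).

Definition updt (Omega : Type) (V : eqType) (s : V -> Omega) (n : nat)
  (xs : 'I_n -> V) (a : 'I_n -> Omega) : V -> Omega :=
  fun v => match [pick i | xs i == v] with Some i => a i | None => s v end.

Fixpoint sat (Omega : Type) (q : ops Omega) (V : eqType) (phi : form q V)
  : (V -> Omega) -> Prop :=
  match phi with
  | FRel i xs => fun s => rel q i (fun t => s (xs t))
  | FNeg phi => fun s => ~ sat phi s
  | FAnd J phis => fun s => forall t : J, sat (phis t) s
  | FEx X phi => fun s => exists s' : V -> Omega,
                    (forall v, ~ X v -> s' v = s v) /\ sat phi s'
  | FQ j xs _ phis => fun s =>
      quant q j (fun m a => sat (phis m) (updt s (xs m) a))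
  end.

Fixpoint free (Omega : Type) (q : ops Omega) (V : eqType) (phi : form q V)
  : V -> Prop :=
  match phi with
  | FRel i xs => fun v => exists t, xs t = v
  | FNeg phi => fun v => free phi v
  | FAnd J phis => fun v => exists t : J, free (phis t) v
  | FEx X phi => fun v => free phi v /\ ~ X v
  | FQ j xs _ phis => fun v =>
      exists m, free (phis m) v /\ (forall t, xs m t <> v)
  end.

(* a ~_q b : every formula phi(x, ybar) (free variables among x and the finite
   list ybar) satisfies phi(a, cbar) <-> phi(b, cbar) for all parameters cbar. *)
Definition simq (Omega : Type) (q : ops Omega) (a b : Omega) : Prop :=
  forall (V : eqType) (phi : form q V) (x : V) (ys : seq V),
    (forall v, free phi v -> v = x \/ v \in ys) ->
    forall s : V -> Omega,
      sat phi (fun v => if v == x then a else s v) <->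
      sat phi (fun v => if v == x then b else s v).

Definition is_similarity (Omega : Type) (pi : Omega -> Omega -> Prop) : Prop :=
  (forall a, exists b, pi a b) /\ (forall b, exists a, pi a b).

Definition rel_sim (Omega : Type) (pi : Omega -> Omega -> Prop) (k : nat)
  (R S : relT Omega k) : Prop :=
  forall a b : 'I_k -> Omega, (forall t, pi (a t) (b t)) -> (R a <-> S b).

Definition rel_inv (Omega : Type) (rho : Omega -> Omega -> Prop) (k : nat)
  (R : relT Omega k) : Prop := rel_sim rho R R.

Definition quant_inv (Omega : Type) (rho pi : Omega -> Omega -> Prop)
  (l : nat) (k : 'I_l -> nat) (Q : quantT Omega k) : Prop :=
  forall Rs Ss : forall m : 'I_l, relT Omega (k m),
    (forall m, rel_inv rho (Rs m)) -> (forall m, rel_inv rho (Ss m)) ->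
    (forall m, rel_sim pi (Rs m) (Ss m)) -> (Q Rs <-> Q Ss).

Definition Sim (Omega : Type) (q : ops Omega) (pi : Omega -> Omega -> Prop) : Prop :=
  [/\ is_similarity pi,
      (forall i, rel_inv pi (rel q i)) &
      (forall j, quant_inv (simq q) pi (quant q j))].

Definition approxP (Omega : Type) (Pi : (Omega -> Omega -> Prop) -> Prop)
  (a b : Omega) : Prop :=
  forall (k : nat) (c : 'I_k -> Omega), exists pi, [/\ Pi pi, pi a b &
      forall t, pi (c t) (c t)].

Definition InvQ (Omega : Type) (Pi : (Omega -> Omega -> Prop) -> Prop)
  (l : nat) (k : 'I_l -> nat) (Q : quantT Omega k) : Prop :=
  forall pi, Pi pi -> quant_inv (approxP Pi) pi Q.

Definition cls (Omega : Type) (q : ops Omega) : Type :=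
  {C : Omega -> Prop | exists a, C = simq q a}.

Definition cl (Omega : Type) (q : ops Omega) (a : Omega) : cls q :=
  exist _ (simq q a) (ex_intro _ a erefl).

Definition sim_quot (Omega : Type) (q : ops Omega) (pi : Omega -> Omega -> Prop)
  : cls q -> cls q -> Prop :=
  fun C D => exists a b, [/\ pi a b, C = cl q a & D = cl q b].

Definition rel_quot (Omega : Type) (q : ops Omega) (k : nat) (R : relT Omega k)
  : relT (cls q) k :=
  fun C => exists a : 'I_k -> Omega, R a /\ forall t, C t = cl q (a t).

Definition rel_cup (Omega : Type) (q : ops Omega) (k : nat) (R' : relT (cls q) k)
  : relT Omega k := fun a => R' (fun t => cl q (a t)).

Definition quant_quot (Omega : Type) (q : ops Omega) (l : nat) (k : 'I_l -> nat)
  (Q : quantT Omega k) : quantT (cls q) k :=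
  fun R's => Q (fun m => rel_cup (R's m)).

Definition ops_quot (Omega : Type) (q : ops Omega) : ops (cls q) :=
  @Ops (cls q) (RI q) (@rar _ q) (fun i => rel_quot (rel q i))
       (QI q) (@qlen _ q) (@qar _ q) (fun j => quant_quot (quant q j)).

Definition img (O : Type) (f : O -> O) (k : nat) (R : relT O k) : relT O k :=
  fun b => exists a, R a /\ forall t, f (a t) = b t.

Definition pres_rel (O : Type) (f : O -> O) (k : nat) (R : relT O k) : Prop :=
  forall b, img f R b <-> R b.

Definition pres_quant (O : Type) (f : O -> O) (l : nat) (k : 'I_l -> nat)
  (Q : quantT O k) : Prop :=
  forall Rs, Q Rs <-> Q (fun m => img f (Rs m)).

Definition Aut (O : Type) (Q : ops O) (f : O -> O) : Prop :=
  [/\ bijective f, (forall i, pres_rel f (rel Q i)) &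
      (forall j, pres_quant f (quant Q j))].

Definition InvH (O : Type) (H : (O -> O) -> Prop) (l : nat) (k : 'I_l -> nat)
  (Q : quantT O k) : Prop :=
  forall f, H f -> pres_quant f Q.

Arguments simq {Omega} q a b.
Arguments Sim {Omega} q pi.
Arguments cls {Omega} q.
Arguments cl {Omega} q a.
Arguments sim_quot {Omega} q pi C D.
Arguments ops_quot {Omega} q.
Arguments quant_quot {Omega q l k} Q R's.

From Pilot Require Import Defs.
From mathcomp Require Import all_boot.
From Stdlib Require Import ClassicalEpsilon FunctionalExtensionality
  PropExtensionality ProofIrrelevance.

(* The key semantic fact is a transfer principle: if pi is a similarity under
   which the relations of q are invariant and the quantifiers of q are
   invariant along pi (on ~-invariant arguments), then satisfaction of every
   formula of L^-(q) is preserved along pi.  Applied to ~ itself it shows that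
   ~ belongs to Sim(q) and that every definable relation is ~-invariant;
   applied to an arbitrary pi in Sim(q) it shows that pi respects ~, so that
   pi/~ is the graph of a permutation of Omega/~.

   On the quotient side, ~-invariant relations R on Omega and relations on
   Omega/~ correspond through R |-> R/~ and R' |-> cup R'; a map f on classes
   that is compatible with pi transports R/~ to S/~ whenever R pi S.  These
   two dictionaries turn the invariance conditions defining Sim(q) into the
   preservation conditions defining Aut(q/~) and back, which gives (1).
   For (2) we show that approx_{Sim(q)} is just ~, after which the same two
   transfer lemmas for quantifiers yield both directions. *)

Set Implicit Arguments. Unset Strict Implicit.

Lemma iff_eq (P Q : Prop) : (P <-> Q) -> P = Q.
Proof. exact: propositional_extensionality. Qed.

Lemma rel_sim_refl_eq (Omega : Type) (rho : Omega -> Omega -> Prop) k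
    (R S : relT Omega k) :
  (forall a, rho a a) -> rel_sim rho R S -> R = S.
Proof.
move=> rho_refl RS; apply: functional_extensionality => a.
by apply: iff_eq; apply: RS.
Qed.

Lemma quant_inv_refl (Omega : Type) (rho pi : Omega -> Omega -> Prop) l
    (k : 'I_l -> nat) (Q : quantT Omega k) :
  (forall a, pi a a) -> quant_inv rho pi Q.
Proof.
move=> pi_refl Rs Ss _ _ RSs.
have -> // : Rs = Ss.
by apply: functional_extensionality_dep => m; apply: rel_sim_refl_eq (RSs m).
Qed.

(* For a reflexive rho, invariance under rho follows from invariance under
   changing a single coordinate along rho (change the coordinates one by one). *)
Lemma rel_inv_coordwise (Omega : Type) (rho : Omega -> Omega -> Prop) k
    (R : relT Omega k) :
  (forall a, rho a a) ->
  (forall (a : 'I_k -> Omega) (x : 'I_k) b, rho (a x) b ->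
      R a <-> R (fun t => if t == x then b else a t)) ->
  rel_inv rho R.
Proof.
move=> rho_refl step a b ab.
pose c n (t : 'I_k) := if (t < n)%N then b t else a t.
have c0 : c 0 = a by [].
have ck : c k = b by apply: functional_extensionality => t; rewrite /c ltn_ord.
suff chain n : R a <-> R (c n) by rewrite -ck; apply: chain.
elim: n => [|n IH]; first by rewrite c0.
apply: iff_trans IH _.
case: (ltnP n k) => [nk | kn]; last first.
  have -> // : c n.+1 = c n.
  apply: functional_extensionality => t; rewrite /c ltnS.
  by have tn : (t < n)%N := leq_trans (ltn_ord t) kn; rewrite tn ltnW.
set x := Ordinal nk.
have -> : c n.+1 = (fun t => if t == x then b x else c n t).
  apply: functional_extensionality => t; rewrite /c ltnS leq_eqVlt.
  case: (eqVneq t x) => [-> | ne]; first by rewrite eqxx.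
  rewrite (_ : (t == n :> nat) = false) //.
  by apply/eqP => tn; move/eqP: ne; apply; apply: val_inj.
by apply: (step (c n) x (b x)); rewrite /c ltnn.
Qed.

Section Classes.
Variables (Omega : Type) (q : ops Omega).

Lemma simq_refl a : simq q a a.
Proof. by []. Qed.

Lemma simq_sym a b : simq q a b -> simq q b a.
Proof. by move=> ab V phi x ys fr s; apply: iff_sym (ab V phi x ys fr s). Qed.

Lemma simq_trans a b c : simq q a b -> simq q b c -> simq q a c.
Proof.
by move=> ab bc V phi x ys fr s; apply: iff_trans (ab V phi x ys fr s) (bc V phi x ys fr s).
Qed.

Lemma cl_eq a b : cl q a = cl q b <-> simq q a b.
Proof.
split=> [/(f_equal (@proj1_sig _ _)) /= E | ab].
  by rewrite E; apply: simq_refl.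
apply: subset_eq_compat; apply: functional_extensionality => c; apply: iff_eq.
by split; [apply: simq_trans (simq_sym ab) | apply: simq_trans ab].
Qed.

Lemma cl_surj (C : cls q) : exists a, C = cl q a.
Proof. by case: C => P [a Pa]; exists a; apply: subset_eq_compat. Qed.

End Classes.

Section Semantics.
Variables (Omega : Type) (q : ops Omega).

Lemma sat_free (V : eqType) (phi : form q V) (s s' : V -> Omega) :
  (forall v, free phi v -> s v = s' v) -> (sat phi s <-> sat phi s').
Proof.
elim: phi s s' => /= [i xs | phi IH | J phis IH | X phi IH | j xs _ phis IH] s s' ss'.
- have -> // : (fun t => s (xs t)) = (fun t => s' (xs t)).
  by apply: functional_extensionality => t; apply: ss'; exists t.
- by rewrite (IH s s' ss').
- by split=> sat_t t; [rewrite -(IH t s s') | rewrite (IH t s s')] => // v fv;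
    apply: ss'; exists t.
- have extend (s0 s1 s2 : V -> Omega) :
      (forall v, free phi v -> ~ X v -> s1 v = s2 v) ->
      (forall v, ~ X v -> s0 v = s1 v) -> sat phi s0 ->
      exists s3, (forall v, ~ X v -> s3 v = s2 v) /\ sat phi s3.
    move=> s12 s01 sat0.
    exists (fun v => if excluded_middle_informative (X v) then s0 v else s2 v).
    split=> [v nX | ]; first by case: excluded_middle_informative.
    apply/(IH s0) => // v fv; case: excluded_middle_informative => // nX.
    by rewrite s01 // s12.
  split=> -[s0 [s01 sat0]]; apply: (extend s0 _ _ _ s01 sat0) => v fv nX.
    by apply: ss'.
  by rewrite ss'.
- have -> // : (fun m a => sat (phis m) (updt s (xs m) a)) =
               (fun m a => sat (phis m) (updt s' (xs m) a)).
  apply: functional_extensionality_dep => m; apply: functional_extensionality => a.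
  apply: iff_eq; apply: IH => v fv; rewrite /updt.
  case: pickP => [// | none]; apply: ss'; exists m; split=> // t xt.
  by move: (none t); rewrite xt eqxx.
Qed.

Lemma updt_rel (V : eqType) (rho : Omega -> Omega -> Prop) (s s' : V -> Omega) n
    (xs : 'I_n -> V) a b :
  (forall v, rho (s v) (s' v)) -> (forall t, rho (a t) (b t)) ->
  forall v, rho (updt s xs a v) (updt s' xs b v).
Proof. by move=> ss' ab v; rewrite /updt; case: pickP. Qed.

(* The basic relations of q are ~-invariant: change one coordinate at a time,
   using the atomic formula with that coordinate as distinguished variable. *)
Lemma rel_simq i : rel_inv (simq q) (Defs.rel q i).
Proof.
apply: rel_inv_coordwise => [a | a x b ab]; first exact: simq_refl.
have := ab ('I_(rar i) : eqType) (FRel (i:=i) id) x (enum 'I_(rar i)) _ a; rewrite /=.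
have -> // : (fun t => if t == x then a x else a t) = a.
  by apply: functional_extensionality => t; case: eqP => [-> |].
by apply => v _; right; apply: mem_enum.
Qed.

Lemma sat_transfer (rho pi : Omega -> Omega -> Prop) :
  (forall a, rho a a) ->
  (forall (V : eqType) (phi : form q V) (s s' : V -> Omega),
      (forall v, rho (s v) (s' v)) -> (sat phi s <-> sat phi s')) ->
  is_similarity pi -> (forall i, rel_inv pi (Defs.rel q i)) ->
  (forall j, quant_inv rho pi (quant q j)) ->
  forall (V : eqType) (phi : form q V) (s s' : V -> Omega),
    (forall v, pi (s v) (s' v)) -> (sat phi s <-> sat phi s').
Proof.
move=> rho_refl rho_def [/ClassicalEpsilon.choice [fw fwP] /ClassicalEpsilon.choice [bw bwP]]
  pi_rel pi_quant V phi.
elim: phi => /= [i xs | phi IH | J phis IH | X phi IH | j xs _ phis IH] s s' ss'.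
- by apply: pi_rel => t; apply: ss'.
- by rewrite (IH s s' ss').
- by split=> sat_t t; [rewrite -(IH t s s') | rewrite (IH t s s')].
- split=> -[s1 [s1s sat1]].
  + exists (fun v => if excluded_middle_informative (X v) then fw (s1 v) else s' v).
    split=> [v nX | ]; first by case: excluded_middle_informative.
    apply/(IH s1) => // v; case: excluded_middle_informative => // nX.
    by rewrite s1s.
  + exists (fun v => if excluded_middle_informative (X v) then bw (s1 v) else s v).
    split=> [v nX | ]; first by case: excluded_middle_informative.
    apply/(IH _ s1) => // v; case: excluded_middle_informative => nX /=.
      exact: bwP.
    by rewrite s1s.
- apply: pi_quant => m a b ab.
  + by apply: rho_def; apply: updt_rel.
  + by apply: rho_def; apply: updt_rel.
  + by apply: IH; apply: updt_rel.
Qed.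

Lemma simq_Sim : Sim q (simq q).
Proof.
split; first by split=> a; exists a; apply: simq_refl.
  exact: rel_simq.
by move=> j; apply: quant_inv_refl; apply: simq_refl.
Qed.

Lemma sat_simq (V : eqType) (phi : form q V) (s s' : V -> Omega) :
  (forall v, simq q (s v) (s' v)) -> (sat phi s <-> sat phi s').
Proof.
have [simq_total _ _] := simq_Sim.
apply: (sat_transfer (rho := eq) (fun a => erefl a) _ simq_total rel_simq).
- move=> V' phi' s1 s2 s12.
  by have -> // : s1 = s2 by apply: functional_extensionality.
- by move=> j; apply: quant_inv_refl; apply: simq_refl.
Qed.

Lemma sat_Sim pi (V : eqType) (phi : form q V) (s s' : V -> Omega) :
  Sim q pi -> (forall v, pi (s v) (s' v)) -> (sat phi s <-> sat phi s').
Proof.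
case=> pi_total pi_rel pi_quant.
by apply: (sat_transfer (rho := simq q)) => //; apply: sat_simq.
Qed.

Lemma Sim_converse pi : Sim q pi -> Sim q (fun a b => pi b a).
Proof.
case=> [[pi_l pi_r] pi_rel pi_quant]; split.
- by split=> a; [case: (pi_r a) | case: (pi_l a)] => b; exists b.
- by move=> i a b ab; apply: iff_sym; apply: pi_rel.
- move=> j Rs Ss inv_R inv_S RS; apply: iff_sym; apply: pi_quant => // m a b ab.
  by apply: iff_sym; apply: RS.
Qed.

(* A similarity of Sim(q) maps ~-equivalent points to ~-equivalent points:
   pull the parameters back along pi, compare there, and push forward. *)
Lemma Sim_respects_simq pi a b a' b' :
  Sim q pi -> pi a b -> pi a' b' -> simq q a a' -> simq q b b'.
Proof.
move=> pi_Sim ab ab' aa' V phi x ys fr s.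
have [[_ /ClassicalEpsilon.choice [bw bwP]] _ _] := pi_Sim.
have lift c d : pi c d ->
    sat phi (fun v => if v == x then c else bw (s v)) <->
    sat phi (fun v => if v == x then d else s v).
  by move=> cd; apply: (sat_Sim phi pi_Sim) => v; case: (v == x).
apply: iff_trans (iff_sym (lift _ _ ab)) _.
exact: iff_trans (aa' V phi x ys fr (fun v => bw (s v))) (lift _ _ ab').
Qed.

(* Applied to the converse, this shows that pi/~ is injective as well. *)
Lemma Sim_simq_iff pi a b a' b' :
  Sim q pi -> pi a b -> pi a' b' -> (simq q a a' <-> simq q b b').
Proof.
move=> pi_Sim ab ab'; split; first exact: Sim_respects_simq pi_Sim ab ab'.
exact: Sim_respects_simq (Sim_converse pi_Sim) ab ab'.
Qed.

End Semantics.

Arguments rel_simq {Omega q} i.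

Section Quotient.
Variables (Omega : Type) (q : ops Omega).

Lemma rel_quot_cl k (R : relT Omega k) (b : 'I_k -> Omega) :
  rel_inv (simq q) R -> (rel_quot R (fun t => cl q (b t)) <-> R b).
Proof.
move=> R_inv; split=> [[a [Ra ab]] | Rb]; last by exists b.
by apply/(R_inv b a) => // t; apply/cl_eq; rewrite ab.
Qed.

Lemma rel_cup_inv k (R' : relT (cls q) k) : rel_inv (simq q) (rel_cup R').
Proof.
move=> a b ab; rewrite /rel_cup.
have -> // : (fun t => cl q (a t)) = (fun t => cl q (b t)).
by apply: functional_extensionality => t; apply/cl_eq.
Qed.

Lemma rel_cup_quot k (R : relT Omega k) :
  rel_inv (simq q) R -> rel_cup (rel_quot (q := q) R) = R.
Proof.
by move=> R_inv; apply: functional_extensionality => b; apply: iff_eq; apply: rel_quot_cl.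
Qed.

Lemma rel_cup_img (f : cls q -> cls q) k (R' : relT (cls q) k) a b :
  injective f -> (forall t, f (cl q (a t)) = cl q (b t)) ->
  (rel_cup R' a <-> rel_cup (img f R') b).
Proof.
move=> f_inj fab; rewrite /rel_cup /img; split=> [R'a | [A [R'A fA]]].
  by exists (fun t => cl q (a t)).
have -> // : (fun t => cl q (a t)) = A.
by apply: functional_extensionality => t; apply: f_inj; rewrite fA fab.
Qed.

Lemma img_rel_quot (f : cls q -> cls q) k (R : relT Omega k) a b :
  injective f -> rel_inv (simq q) R -> (forall t, f (cl q (a t)) = cl q (b t)) ->
  (img f (rel_quot R) (fun t => cl q (b t)) <-> R a).
Proof.
move=> f_inj R_inv fab; split=> [[A [[a' [Ra' Aa']] fA]] | Ra].
  by apply/(R_inv a a') => // t; apply/cl_eq; apply: f_inj; rewrite fab -fA Aa'.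
by exists (fun t => cl q (a t)); split=> //; exists a.
Qed.

Lemma rel_cup_img_quot (pi : Omega -> Omega -> Prop) (f : cls q -> cls q) k
    (R S : relT Omega k) :
  injective f -> (forall b, exists a, pi a b) ->
  (forall a b, pi a b -> f (cl q a) = cl q b) ->
  rel_inv (simq q) R -> rel_sim pi R S -> rel_cup (img f (rel_quot R)) = S.
Proof.
move=> f_inj /ClassicalEpsilon.choice [bw bwP] f_pi R_inv RS.
apply: functional_extensionality => b; apply: iff_eq.
apply: iff_trans (img_rel_quot (a := fun t => bw (b t)) f_inj R_inv _) _.
  by move=> t; apply: f_pi.
by apply: RS.
Qed.

Lemma quant_quot_pres (pi : Omega -> Omega -> Prop) (f : cls q -> cls q) l
    (k : 'I_l -> nat) (Q : quantT Omega k) :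
  injective f -> (forall a b, pi a b -> f (cl q a) = cl q b) ->
  quant_inv (simq q) pi Q -> pres_quant f (quant_quot (q := q) Q).
Proof.
move=> f_inj f_pi Q_inv R's; rewrite /quant_quot.
apply: Q_inv => m; try exact: rel_cup_inv.
by move=> a b ab; apply: rel_cup_img => // t; apply: f_pi.
Qed.

Lemma quant_pres_transfer (pi : Omega -> Omega -> Prop) (f : cls q -> cls q) l
    (k : 'I_l -> nat) (Q : quantT Omega k) Rs Ss :
  injective f -> (forall b, exists a, pi a b) ->
  (forall a b, pi a b -> f (cl q a) = cl q b) ->
  (forall m, rel_inv (simq q) (Rs m)) -> (forall m, rel_sim pi (Rs m) (Ss m)) ->
  pres_quant f (quant_quot (q := q) Q) -> (Q Rs <-> Q Ss).
Proof.
move=> f_inj pi_r f_pi R_inv RS Q_pres.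
have := Q_pres (fun m => rel_quot (Rs m)); rewrite /quant_quot.
have -> : (fun m => rel_cup (rel_quot (q := q) (Rs m))) = Rs.
  by apply: functional_extensionality_dep => m; apply: rel_cup_quot.
have -> // : (fun m => rel_cup (img f (rel_quot (q := q) (Rs m)))) = Ss.
by apply: functional_extensionality_dep => m; apply: rel_cup_img_quot pi_r f_pi _ _.
Qed.

End Quotient.

Section Correspondence.
Variables (Omega : Type) (q : ops Omega).

Definition cl_graph (f : cls q -> cls q) (a b : Omega) : Prop := f (cl q a) = cl q b.

Lemma cl_tuple k (B : 'I_k -> cls q) : exists b, B = fun t => cl q (b t).
Proof.
have /ClassicalEpsilon.choice [b bP] : forall t, exists b, B t = cl q b.
  by move=> t; apply: cl_surj.
by exists b; apply: functional_extensionality.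
Qed.

(* For pi in Sim(q), pi/~ is the graph of an automorphism f of q/~: it is
   functional and injective because pi respects ~, total and onto because pi
   is a similarity. *)
Lemma Sim_quot_aut pi : Sim q pi ->
  exists f, [/\ Aut (ops_quot q) f, (forall C D, sim_quot q pi C D <-> f C = D) &
                (forall a b, pi a b -> cl_graph f a b)].
Proof.
move=> pi_Sim; have [[pi_l pi_r] pi_rel pi_quant] := pi_Sim.
have quot_functional C D D' : sim_quot q pi C D -> sim_quot q pi C D' -> D = D'.
  move=> [a [b [ab -> ->]]] [a' [b' [ab' aa' ->]]].
  by apply/cl_eq; apply: (Sim_respects_simq pi_Sim ab ab'); apply/cl_eq.
have quot_injective C C' D : sim_quot q pi C D -> sim_quot q pi C' D -> C = C'.
  move=> [a [b [ab -> ->]]] [a' [b' [ab' -> bb']]].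
  by apply/cl_eq; apply/(Sim_simq_iff pi_Sim ab ab'); apply/cl_eq.
have total C : exists D, sim_quot q pi C D.
  by have [a ->] := cl_surj C; have [b ab] := pi_l a; exists (cl q b), a, b.
have onto D : exists C, sim_quot q pi C D.
  by have [b ->] := cl_surj D; have [a ab] := pi_r b; exists (cl q a), a, b.
have [f fP] := ClassicalEpsilon.choice _ total.
have [g gP] := ClassicalEpsilon.choice _ onto.
have f_pi a b : pi a b -> cl_graph f a b.
  by move=> ab; apply: quot_functional (fP _) _; exists a, b.
have gK : cancel g f by move=> D; apply: quot_functional (fP _) (gP D).
have fK : cancel f g by move=> C; apply: quot_injective (gP _) (fP C).
have f_inj := can_inj fK.
exists f; split=> //; last first.
  by move=> C D; split=> [CD | <-]; [apply: quot_functional (fP C) CD | apply: fP].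
split; [exact: Bijective fK gK | move=> i B | move=> j].
- have [bw bwP] := ClassicalEpsilon.choice _ pi_r.
  have [b ->] := cl_tuple B; rewrite /=.
  apply: iff_trans (img_rel_quot (a := fun t => bw (b t)) f_inj (@rel_simq _ q i) _) _.
    by move=> t; apply: f_pi.
  apply: iff_trans (iff_sym (rel_quot_cl b (@rel_simq _ q i))).
  by apply: pi_rel.
- exact: quant_quot_pres f_inj f_pi (pi_quant j).
Qed.

Lemma aut_graph_Sim f : Aut (ops_quot q) f -> Sim q (cl_graph f).
Proof.
case=> [[g fK gK] f_rel f_quant]; have f_inj := can_inj fK.
have pre b : exists a, cl_graph f a b.
  by have [a ga] := cl_surj (g (cl q b)); exists a; rewrite /cl_graph -ga gK.
split; [split=> // a | move=> i a b ab | move=> j Rs Ss R_inv _ RS].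
- by have [b fb] := cl_surj (f (cl q a)); exists b.
- apply: iff_trans (iff_sym (img_rel_quot f_inj (rel_simq i) ab)) _.
  apply: iff_trans (f_rel i _) _.
  exact: rel_quot_cl b (rel_simq i).
- exact: quant_pres_transfer f_inj pre (fun a b fab => fab) R_inv RS (f_quant j).
Qed.

Lemma sim_quot_cl_graph f C D : sim_quot q (cl_graph f) C D <-> f C = D.
Proof.
split=> [[a [b [fab -> ->]]] // | fCD].
have [a Ca] := cl_surj C; have [b Db] := cl_surj D.
by exists a, b; split; rewrite /cl_graph -?Ca -?Db.
Qed.

(* The equivalence approx_{Sim(q)} is ~: since ~ lies in Sim(q) one direction
   is immediate; conversely a similarity fixing the parameters of a formula
   and relating a to b transfers its satisfaction from a to b. *)
Lemma approx_Sim_simq : approxP (Sim q) = simq q.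
Proof.
apply: functional_extensionality => a; apply: functional_extensionality => b.
apply: iff_eq; split=> [ab V phi x ys fr s | ab k c]; last first.
  by exists (simq q); split; [exact: simq_Sim | exact: ab | move=> t; apply: simq_refl].
have [pi [pi_Sim pab pc]] := ab (size ys) (fun t => s (nth x ys t)).
have [[/ClassicalEpsilon.choice [fw fwP] _] _ _] := pi_Sim.
pose s' v := if v == x then b else if v \in ys then s v else fw (s v).
apply: iff_trans (sat_Sim phi (s := fun v => if v == x then a else s v) (s' := s') pi_Sim _) _.
  move=> v; rewrite /s'; case: (v == x) => //; case: ifP => [v_ys | _]; last exact: fwP.
  have v_lt : (index v ys < size ys)%N by rewrite index_mem.
  by have := pc (Ordinal v_lt); rewrite /= nth_index.
apply: sat_free => v /fr [-> | v_ys]; rewrite /s'; first by rewrite eqxx.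
by case: (v == x); rewrite ?v_ys.
Qed.

(* (2), first half: invariance under Sim(q) gives preservation of Q/~ by
   every automorphism f of q/~, via the similarity induced by f. *)
Lemma InvQ_Sim_InvH l (k : 'I_l -> nat) (Q : quantT Omega k) :
  InvQ (Sim q) Q -> InvH (Aut (ops_quot q)) (quant_quot Q).
Proof.
rewrite /InvQ approx_Sim_simq => Q_inv f f_Aut.
have [[g fK _] _ _] := f_Aut.
exact: quant_quot_pres (can_inj fK) (fun a b fab => fab) (Q_inv _ (aut_graph_Sim f_Aut)).
Qed.

(* (2), second half: preservation of Q/~ by Aut(q/~) gives invariance along
   every pi in Sim(q), via the automorphism induced by pi. *)
Lemma InvH_InvQ_Sim l (k : 'I_l -> nat) (Q : quantT Omega k) :
  InvH (Aut (ops_quot q)) (quant_quot Q) -> InvQ (Sim q) Q.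
Proof.
rewrite /InvQ approx_Sim_simq => Q_pres pi pi_Sim Rs Ss R_inv _ RS.
have [f [f_Aut _ f_pi]] := Sim_quot_aut pi_Sim.
have [[g fK _] _ _] := f_Aut; have [[_ pi_r] _ _] := pi_Sim.
exact: quant_pres_transfer (can_inj fK) pi_r f_pi R_inv RS (Q_pres f f_Aut).
Qed.

End Correspondence.

Theorem proposition17 (Omega : Type) (q : ops Omega) :
  (* (1) Sim(q)/~ = Aut(q/~), as sets of relations on Omega/~ *)
  ((forall pi, Sim q pi ->
      exists f, Aut (ops_quot q) f /\ forall C D, sim_quot q pi C D <-> f C = D) /\
   (forall f, Aut (ops_quot q) f ->
      exists pi, Sim q pi /\ forall C D, sim_quot q pi C D <-> f C = D)) /\
  (* (2) *)
  (forall (l : nat) (k : 'I_l -> nat) (Q : quantT Omega k),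
      InvQ (Sim q) Q <-> InvH (Aut (ops_quot q)) (quant_quot Q)).
Proof.
split; first split.
- by move=> pi /Sim_quot_aut [f [f_Aut f_graph _]]; exists f.
- move=> f f_Aut; exists (cl_graph f); split; first exact: aut_graph_Sim.
  exact: sim_quot_cl_graph.
- by move=> l k Q; split; [apply: InvQ_Sim_InvH | apply: InvH_InvQ_Sim].
Qed.
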